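(* Assume the Richardson limit shape $\mathcal{S}$ is uniformly curved, and let $z,r,\delta,\beta,\alpha$ and the sets $\mathcal{R}_0^n,\mathcal{B}_0^n,\mathcal{R}_1^n$ be as defined in the context. Then for all sufficiently large $n$ and all $x\in\mathcal{R}_1^n$, \[d(x,\mathcal{R}_0^n)+4(\delta n)^\beta<d(x,\mathcal{B}_0^n).\]
   Context: $\mathcal{S}$ is the limit shape of the Richardson model on $\mathbb{Z}^d$ (each unoccupied site becomes occupied at rate equal to its number of occupied neighbours): the nonrandom compact convex set with nonempty interior such that for every finite nonempty initial set and $\epsilon>0$, a.s. $(1-\epsilon)\mathcal{S}\subseteq\hat Z(s)/s\subseteq(1+\epsilon)\mathcal{S}$ for large $s$, $\hat Z=\{x:\operatorname{dist}_\infty(x,Z)\le1/2\}$. Uniformly curved: there is $\varrho<\infty$ such that each $z\in\partial\mathcal{S}$ lies on the boundary of a Euclidean ball of radius $\varrho$ containing $\mathcal{S}$. Richardson norm $|x|=\inf\{t>0:x\in t\mathcal{S}\}$, metric $d(x,y)=|x-y|$, $d(x,A)=\inf_{y\in A}d(x,y)$, $\pi x=x/|x|$. $D(x;\rho)=\{y:d(x,y)\le\rho\}$, $D(x;\rho_1,\rho_2)=D(x;\rho_2)\setminus D(x;\rho_1)$. Angular sector: $\mathcal{A}(z;\varrho)=\{y\ne0:d(\pi y,z)<\varrho\}$ for $z\in\partial\mathcal{S}$. Fix $z\in\partial\mathcal{S}$, $r>0$, $\delta\in(0,1)$, $\beta\in(1/2,1)$, $\alpha\in(1/2,1)$ with $(\beta+1)/2<\alpha$;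 for $n\ge1$, $A_1=\mathcal{A}(z;r)$, $A_2=\mathcal{A}(z;r+n^{\alpha-1})$, $\mathcal{R}_0^n=D(0;n/(1+\delta),n-n^\beta)\cap A_2\cap\mathbb{Z}^d$, $\mathcal{B}_0^n=(D(0;n/(1+\delta))\cup(D(0;n/(1+\delta),n+n^\beta)\cap A_2^c))\cap\mathbb{Z}^d$, $\mathcal{R}_1^n=D(0;n,n(1+\delta)-(n+\delta n)^\beta)\cap A_1\cap\mathbb{Z}^d$. *)

From HB Require Import structures.
From mathcomp Require Import all_boot all_order all_algebra all_fingroup.
From mathcomp Require Import all_classical all_reals all_analysis.
Import numFieldNormedType.Exports.
Set Implicit Arguments. Unset Strict Implicit. Unset Printing Implicit Defensive.
Import Order.TTheory GRing.Theory Num.Theory.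
Local Open Scope classical_set_scope.
Local Open Scope ring_scope.

Section RichardsonGeometry.
Variables (R : realType) (d : nat).
Local Notation V := 'rV[R]_d.

Definition enorm (x : V) : R := Num.sqrt (\sum_(i < d) x ord0 i ^+ 2).
Definition eball (c : V) (rho : R) : set V := [set y | enorm (y - c) <= rho].

Definition bdry (S : set V) : set V := closure S `\` interior S.

Definition convex_set_pt (S : set V) : Prop :=
  forall x y, S x -> S y -> forall t : R, 0 <= t <= 1 -> S (t *: x + (1 - t) *: y).

(** Invariance under the symmetries of Z^d (coordinate permutations and sign changes). *)
Definition lattice_symmetric (S : set V) : Prop :=
  forall (s : 'S_d) (sg : 'I_d -> bool) (x : V),
    S x -> S (\row_i ((-1) ^+ sg i * x ord0 (s i))).

(** Geometric properties of the Richardson limit shape used as standing assumptions: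
    a nonrandom compact convex set, containing 0 in its interior, invariant under
    the lattice symmetries. *)
Definition richardson_shape (S : set V) : Prop :=
  [/\ compact S, convex_set_pt S, interior S 0 & lattice_symmetric S].

Definition uniformly_curved (S : set V) : Prop :=
  exists2 rho : R, 0 < rho &
    forall z, bdry S z -> exists c : V, enorm (z - c) = rho /\ S `<=` eball c rho.

Definition rnorm (S : set V) (x : V) : R :=
  inf [set t : R | 0 < t /\ exists2 s, S s & x = t *: s].
Definition rdist (S : set V) (x y : V) : R := rnorm S (x - y).
Definition rdist_set (S : set V) (x : V) (A : set V) : R :=
  inf [set rdist S x y | y in A].
Definition rproj (S : set V) (y : V) : V := (rnorm S y)^-1 *: y.

Definition Dball (S : set V) (x : V) (rho : R) : set V := [set y | rdist S x y <= rho].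
Definition Dann (S : set V) (x : V) (rho1 rho2 : R) : set V :=
  Dball S x rho2 `\` Dball S x rho1.
Definition sector (S : set V) (z : V) (rho : R) : set V :=
  [set y | y != 0 /\ rdist S (rproj S y) z < rho].
Definition lattice : set V := [set x | forall i, x ord0 i \is a Num.int].

Definition R0set (S : set V) (z : V) (r del bet alp : R) (n : nat) : set V :=
  Dann S 0 (n%:R / (1 + del)) (n%:R - n%:R `^ bet)
  `&` sector S z (r + n%:R `^ (alp - 1)) `&` lattice.

Definition B0set (S : set V) (z : V) (r del bet alp : R) (n : nat) : set V :=
  (Dball S 0 (n%:R / (1 + del))
   `|` (Dann S 0 (n%:R / (1 + del)) (n%:R + n%:R `^ bet)
        `&` ~` sector S z (r + n%:R `^ (alp - 1))))
  `&` lattice.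

Definition R1set (S : set V) (z : V) (r del bet : R) (n : nat) : set V :=
  Dann S 0 n%:R (n%:R * (1 + del) - (n%:R + del * n%:R) `^ bet)
  `&` sector S z r `&` lattice.

End RichardsonGeometry.

From HB Require Import structures.
From mathcomp Require Import all_boot all_order all_algebra all_fingroup.
From mathcomp Require Import all_classical all_reals all_analysis.
From mathcomp.algebra_tactics Require Import ring lra.
Import numFieldNormedType.Exports.
Import Order.TTheory GRing.Theory Num.Theory.
Local Open Scope classical_set_scope.
Local Open Scope ring_scope.
Set Implicit Arguments. Unset Strict Implicit. Unset Printing Implicit Defensive.

(* The Richardson norm is the gauge of S, and uniform curvature makes it
   quantitatively strictly convex: testing x - y against the normal of the
   supporting ball at the boundary point πx gives
     |x - y| >= |x| - |y| + c |y| |πy - πx|^2.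
   A point of R_0^n close to x ∈ R_1^n is obtained by shrinking x radially to
   norm n - n^β - O(1) and rounding to the lattice, at cost |x| - n + n^β + O(1).
   A point of B_0^n either has norm at most n/(1+δ), at cost at least
   |x| - n/(1+δ), or has norm at most n + n^β and direction at distance at
   least n^(α-1) from πx, at cost at least |x| - n - n^β + c n^(2α-1).  Since
   β < 1 and β < 2α - 1, both exceed the first cost by more than 4(δn)^β for
   large n. *)

(** * Euclidean quadratic form *)

Section SquaredNorm.
Variables (R : realType) (d : nat).
Local Notation V := 'rV[R]_d.
Implicit Types (u v w c : V).

Definition sqnorm u : R := \sum_(i < d) u ord0 i ^+ 2.
Definition dotp u v : R := \sum_(i < d) u ord0 i * v ord0 i.

Lemma sqnorm_ge0 u : 0 <= sqnorm u.
Proof. by apply: sumr_ge0 => i _; rewrite sqr_ge0. Qed.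

Lemma sqnorm_gt0 u : (0 < sqnorm u) = (u != 0).
Proof.
rewrite lt_neqAle sqnorm_ge0 andbT eq_sym; congr negb; apply/idP/eqP => [|->].
  rewrite psumr_eq0 => [/allP u0|i _]; last by rewrite sqr_ge0.
  by apply/rowP => i; have /implyP/(_ isT) := u0 i (mem_index_enum i);
    rewrite sqrf_eq0 mxE => /eqP.
by rewrite /sqnorm big1 // => i _; rewrite mxE expr2 mulr0.
Qed.

Lemma sqr_coord_le_sqnorm u i : u ord0 i ^+ 2 <= sqnorm u.
Proof. by rewrite /sqnorm (bigD1 i) //= lerDl sumr_ge0 // => j _; rewrite sqr_ge0. Qed.

Lemma normr_coord_le u i : `|u ord0 i| <= sqnorm u + 1.
Proof.
have := sqr_coord_le_sqnorm u i; rewrite -real_normK ?num_real // => h.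
have := normr_ge0 (u ord0 i); nra.
Qed.

Lemma dotp0l v : dotp 0 v = 0.
Proof. by rewrite /dotp big1 // => i _; rewrite mxE mul0r. Qed.

Lemma dotpBl u w v : dotp (u - w) v = dotp u v - dotp w v.
Proof. by rewrite /dotp -sumrB; apply: eq_bigr => i _; rewrite !mxE mulrBl. Qed.

Lemma dotpZl (k : R) u v : dotp (k *: u) v = k * dotp u v.
Proof. by rewrite /dotp mulr_sumr; apply: eq_bigr => i _; rewrite mxE mulrA. Qed.

Lemma sqnormD u v : sqnorm (u + v) = sqnorm u + 2 * dotp u v + sqnorm v.
Proof.
rewrite /sqnorm /dotp mulr_sumr -!big_split /=.
by apply: eq_bigr => i _; rewrite mxE; ring.
Qed.

Lemma sqnormZ (k : R) u : sqnorm (k *: u) = k ^+ 2 * sqnorm u.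
Proof. by rewrite /sqnorm mulr_sumr; apply: eq_bigr => i _; rewrite mxE exprMn. Qed.

Lemma sqnormN u : sqnorm (- u) = sqnorm u.
Proof. by rewrite -scaleN1r sqnormZ sqrrN expr1n mul1r. Qed.

Lemma dotp_le_sqnorm u v : 2 * dotp u v <= sqnorm u + sqnorm v.
Proof.
rewrite /sqnorm /dotp mulr_sumr -big_split /=; apply: ler_sum => i _.
have := sqr_ge0 (u ord0 i - v ord0 i); nra.
Qed.

Lemma eball_sqnorm c (rho : R) w : 0 <= rho -> eball c rho w ->
  sqnorm (w - c) <= rho ^+ 2.
Proof.
move=> rho0 hw; rewrite -ler_sqrt ?sqr_ge0 //.
by rewrite sqrtr_sqr ger0_norm.
Qed.

End SquaredNorm.

Lemma ball_row (R : realType) d (p q : 'rV[R]_d) (e : R) : 0 < e ->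
  (forall j, `|p ord0 j - q ord0 j| < e) -> ball p e q.
Proof. by move=> e0 pq; split=> // i j; rewrite (ord1 i) -ball_normE; exact: pq. Qed.

(** * The Richardson norm as a gauge *)

Section Gauge.
Variables (R : realType) (d : nat).
Local Notation V := 'rV[R]_d.
Implicit Types (u v w : V) (t : R).
Variables (S : set V) (eps : R).
Hypothesis eps_gt0 : 0 < eps.
Hypothesis cube_sub : forall u, (forall i, `|u ord0 i| < eps) -> S u.
Hypothesis S_convex : convex_set_pt S.
Hypothesis S_symmetric : forall u, S u -> S (- u).
Local Notation rn := (rnorm S).

Definition scales u := [set t : R | 0 < t /\ exists2 s, S s & u = t *: s].

Lemma shape0 : S 0.
Proof. by apply: cube_sub => i; rewrite mxE normr0. Qed.

Lemma scales_lbound u : has_lbound (scales u).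
Proof. by exists 0 => t [/ltW]. Qed.

Lemma rnorm_le_scale u t : scales u t -> rn u <= t.
Proof. by move=> ut; apply: ge_inf ut; exact: scales_lbound. Qed.

Lemma scales_le u t t' : scales u t -> t <= t' -> scales u t'.
Proof.
move=> [t0 [s Ss ->]] tt'; have t'0 : 0 < t' := lt_le_trans t0 tt'.
split=> //; exists ((t / t') *: s + (1 - t / t') *: 0).
  apply: S_convex => //; first exact: shape0.
  by apply/andP; split; [rewrite divr_ge0 ?ltW | rewrite ler_pdivrMr ?mul1r].
by rewrite scaler0 addr0 scalerA mulrCA divff ?gt_eqF // mulr1.
Qed.

Lemma scales_sqnorm u t : 0 < t -> sqnorm u < (eps * t) ^+ 2 -> scales u t.
Proof.
move=> t0 ut; split=> //; exists (t^-1 *: u); last first.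
  by rewrite scalerA divff ?gt_eqF // scale1r.
apply: cube_sub => i; rewrite mxE normrM ger0_norm ?invr_ge0 ?ltW // mulrC.
rewrite ltr_pdivrMr //; have := sqr_coord_le_sqnorm u i.
rewrite -real_normK ?num_real // => ui; have := normr_ge0 (u ord0 i).
have : 0 < eps * t by rewrite mulr_gt0.
nra.
Qed.

Lemma scales_neq0 u : scales u !=set0.
Proof.
exists ((sqnorm u + 1) / eps); apply: scales_sqnorm.
  by rewrite divr_gt0 // ltr_pwDr ?sqnorm_ge0.
by rewrite mulrC divfK ?gt_eqF //; have := sqnorm_ge0 u; nra.
Qed.

Lemma rnorm_ge0 u : 0 <= rn u.
Proof. by apply: lb_le_inf; [exact: scales_neq0 | move=> t [/ltW]]. Qed.

Lemma scales_gt u t : rn u < t -> scales u t.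
Proof.
move=> ut; have : 0 < t - rn u by rewrite subr_gt0.
move=> /(inf_adherent)/(_ (conj (scales_neq0 u) (scales_lbound u))) [s us st].
by apply: (scales_le us); move: st; rewrite /rnorm addrC subrK => /ltW.
Qed.

Lemma rnorm_le_scaled u v (k : R) : 0 < k ->
  (forall t, scales v t -> scales u (k * t)) -> rn u <= k * rn v.
Proof.
move=> k0 vu; apply/ler_addgt0Pr => e e0.
have /vu/rnorm_le_scale : scales v (rn v + e / k) by apply: scales_gt; rewrite ltrDl divr_gt0.
by rewrite mulrDr mulrCA divff ?gt_eqF // mulr1.
Qed.

Lemma rnormZ_gt0 (k : R) u : 0 < k -> rn (k *: u) = k * rn u.
Proof.
move=> k0; apply/eqP; rewrite eq_le; apply/andP; split.
  apply: rnorm_le_scaled => // t [t0 [s Ss ->]]; split; first by rewrite mulr_gt0.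
  by exists s => //; rewrite scalerA.
rewrite -ler_pdivlMl //; apply: rnorm_le_scaled; first by rewrite invr_gt0.
move=> t [t0 [s Ss e]]; split; first by rewrite mulr_gt0 ?invr_gt0.
by exists s => //; rewrite -scalerA -e scalerA mulVf ?gt_eqF // scale1r.
Qed.

Lemma rnorm0 : rn 0 = 0.
Proof.
apply/eqP; rewrite eq_le rnorm_ge0 andbT; apply/ler_addgt0Pr => e e0.
rewrite add0r; apply: rnorm_le_scale; split=> //.
by exists 0; [exact: shape0 | rewrite scaler0].
Qed.

Lemma rnormN u : rn (- u) = rn u.
Proof.
suff le u' : rn (- u') <= rn u' by apply/eqP; rewrite eq_le le -{1}[u]opprK le.
rewrite -[X in _ <= X]mul1r; apply: rnorm_le_scaled => // t [t0 [s Ss ->]].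
by rewrite mul1r; split=> //; exists (- s); [exact: S_symmetric | rewrite scalerN].
Qed.

Lemma rnormZ (k : R) u : rn (k *: u) = `|k| * rn u.
Proof.
have [k0|k0|->] := ltrgtP k 0.
- rewrite -[k *: u]opprK -scaleNr rnormN rnormZ_gt0 ?oppr_gt0 //.
  by rewrite ltr0_norm.
- by rewrite rnormZ_gt0 // gtr0_norm.
- by rewrite scale0r rnorm0 normr0 mul0r.
Qed.

Lemma rnormD u v : rn (u + v) <= rn u + rn v.
Proof.
apply/ler_addgt0Pr => e e0; have e20 : 0 < e / 2 by rewrite divr_gt0.
have /scales_gt [a0 [s Ss eu]] : rn u < rn u + e / 2 by rewrite ltrDl.
have /scales_gt [b0 [s' Ss' ev]] : rn v < rn v + e / 2 by rewrite ltrDl.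
set a := rn u + e / 2 in a0 eu; set b := rn v + e / 2 in b0 ev.
have ab0 : 0 < a + b by rewrite addr_gt0.
have -> : rn u + rn v + e = a + b by rewrite /a /b; field.
apply: rnorm_le_scale; split=> //.
exists ((a / (a + b)) *: s + (1 - a / (a + b)) *: s').
  apply: S_convex => //; apply/andP; split; first by rewrite divr_ge0 ?ltW.
  by rewrite ler_pdivrMr // mul1r lerDl ltW.
rewrite eu ev scalerDr !scalerA; congr (_ *: _ + _ *: _); field; exact: lt0r_neq0.
Qed.

Lemma rnorm_lerB_dist u v : rn u - rn v <= rn (u - v).
Proof. by have := rnormD (u - v) v; rewrite subrK lerBlDr. Qed.

Lemma rnorm_distC u v : rn (u - v) = rn (v - u).
Proof. by rewrite -rnormN opprB. Qed.

Lemma sqnorm_ge_rnorm u : (eps * rn u) ^+ 2 <= sqnorm u.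
Proof.
have sq0 := sqrtr_ge0 (sqnorm u); have sqK := sqr_sqrtr (sqnorm_ge0 u).
have : rn u <= Num.sqrt (sqnorm u) / eps.
  apply/ler_addgt0Pr => e e0; apply: rnorm_le_scale; apply: scales_sqnorm.
    by rewrite ltr_pwDr // divr_ge0 // ltW.
  rewrite mulrDr mulrCA divff ?gt_eqF // mulr1.
  have : 0 < eps * e by rewrite mulr_gt0.
  nra.
rewrite ler_pdivlMr // mulrC => le_sqrt.
have : 0 <= eps * rn u by rewrite mulr_ge0 ?rnorm_ge0 ?ltW.
nra.
Qed.


(** * Radial projection onto the boundary *)

Variable B0 : R.
Hypothesis S_bounded : forall w, S w -> sqnorm w <= B0.
Hypothesis S_closed : closed S.

Lemma sqnorm_le_scale u t : scales u t -> sqnorm u <= t ^+ 2 * B0.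
Proof.
move=> [_ [s Ss ->]]; rewrite sqnormZ.
by apply: ler_wpM2l; [rewrite sqr_ge0 | exact: S_bounded].
Qed.

Lemma rnorm_gt0 u : (0 < rn u) = (u != 0).
Proof.
apply/idP/idP => [|u0]; first by apply: contraTneq => ->; rewrite rnorm0 ltxx.
rewrite lt_neqAle rnorm_ge0 andbT eq_sym; apply/eqP => ru0.
have Q0 : 0 < sqnorm u by rewrite sqnorm_gt0.
have B0n := ler_norm B0; have B0p := normr_ge0 B0.
have den0 : 0 < sqnorm u + `|B0| + 1 by lra.
set t := sqnorm u / (sqnorm u + `|B0| + 1).
have t0 : 0 < t by rewrite divr_gt0.
have tE : t * (sqnorm u + `|B0| + 1) = sqnorm u by rewrite divfK ?gt_eqF.
have t1 : t < 1 by rewrite /t ltr_pdivrMr // mul1r; lra.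
have /sqnorm_le_scale ut : scales u t by apply: scales_gt; rewrite ru0.
have : 0 <= t ^+ 2 * (`|B0| - B0) by rewrite mulr_ge0 ?sqr_ge0 ?subr_ge0.
have : 0 <= t * (1 - t) * `|B0|.
  by apply: mulr_ge0 => //; apply: mulr_ge0; rewrite ?subr_ge0 ltW.
nra.
Qed.

Lemma rproj_scaleE u : u = rn u *: rproj S u.
Proof.
have [->|u0] := eqVneq u 0; first by rewrite /rproj !scaler0.
by rewrite /rproj scalerA divff ?scale1r // gt_eqF ?rnorm_gt0.
Qed.

Lemma rnorm_rproj u : u != 0 -> rn (rproj S u) = 1.
Proof.
move=> u0; rewrite /rproj rnormZ ger0_norm ?invr_ge0 ?rnorm_ge0 //.
by rewrite mulVf // gt_eqF ?rnorm_gt0.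
Qed.

Lemma rproj_neq0 u : u != 0 -> rproj S u != 0.
Proof.
move=> u0; apply: contra_neq (oner_neq0 R) => p0.
by rewrite -(rnorm_rproj u0) p0 rnorm0.
Qed.

Lemma rproj_closure u : u != 0 -> closure S (rproj S u).
Proof.
move=> u0 P /nbhs_ballP [e /= e0 eP].
have r0 : 0 < rn u by rewrite rnorm_gt0.
set r := rn u in r0 *; set M := sqnorm u + 1.
have M10 : 0 < M + 1 by rewrite /M -addrA ltr_wpDl ?sqnorm_ge0.
set eta := e * r ^+ 2 / (M + 1).
have eta0 : 0 < eta by rewrite /eta divr_gt0 ?mulr_gt0 ?exprn_gt0.
have rt : 0 < r + eta by rewrite addr_gt0.
have [_ [s Ss us]] : scales u (r + eta) by apply: scales_gt; rewrite ltrDl.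
exists s; split=> //; apply: eP; apply: ball_row => // j.
have -> : s = (r + eta)^-1 *: u by rewrite us scalerA mulVf ?scale1r // gt_eqF.
rewrite /rproj !mxE -/r -mulrBl normrM.
have -> : r^-1 - (r + eta)^-1 = eta / (r * (r + eta)).
  by field; apply/andP; split; apply: lt0r_neq0.
rewrite ger0_norm ?divr_ge0 ?mulr_ge0 ?ltW //.
have uj := normr_coord_le u j; rewrite -/M in uj.
have h1 : eta / (r * (r + eta)) <= e / (M + 1).
  have -> : eta / (r * (r + eta)) = e / (M + 1) * (r / (r + eta)).
    rewrite {1}/eta; field.
    by rewrite !lt0r_neq0.
  apply: ler_piMr; first by rewrite divr_ge0 ?ltW.
  by rewrite ler_pdivrMr // mul1r lerDl ltW.
apply: le_lt_trans (ler_wpM2r (normr_ge0 _) h1) _.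
by rewrite mulrAC ltr_pdivrMr // ltr_pM2l //; lra.
Qed.

Lemma rproj_shape u : S (rproj S u).
Proof.
have [->|u0] := eqVneq u 0; first by rewrite /rproj scaler0; exact: shape0.
by rewrite {1}(closure_id S).1 //; exact: rproj_closure.
Qed.

Lemma rproj_bdry u : u != 0 -> bdry S (rproj S u).
Proof.
move=> u0; split; first exact: rproj_closure.
move=> /nbhs_ballP [e /= e0 eP]; set p := rproj S u.
have r0 : 0 < rn u by rewrite rnorm_gt0.
have Q2 : 0 < sqnorm p + 2 by rewrite ltr_wpDl ?sqnorm_ge0.
set eta := e / (sqnorm p + 2).
have eta0 : 0 < eta by rewrite divr_gt0.
have Sp : S ((1 + eta) *: p).
  apply: eP; apply: ball_row => // j; rewrite [X in _ - X]mxE.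
  have -> : p ord0 j - (1 + eta) * p ord0 j = - (eta * p ord0 j) by ring.
  rewrite normrN normrM ger0_norm ?ltW // /eta mulrAC ltr_pdivrMr //.
  by rewrite ltr_pM2l //; have := normr_coord_le p j; lra.
have : scales u (rn u / (1 + eta)).
  split; first by rewrite divr_gt0 // addr_gt0.
  exists ((1 + eta) *: p) => //; rewrite scalerA divfK ?gt_eqF ?addr_gt0 //.
  exact: rproj_scaleE.
move/rnorm_le_scale; rewrite ler_pdivlMr ?addr_gt0 // mulrDr mulr1 gerDl.
by rewrite leNgt mulr_gt0.
Qed.

Lemma rnorm_rprojB_le u v : u != 0 -> v != 0 ->
  rn (rproj S u - rproj S v) <= 2 * rn (u - v) / rn v.
Proof.
move=> u0 v0; have ru : 0 < rn u by rewrite rnorm_gt0.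
have rv : 0 < rn v by rewrite rnorm_gt0.
have -> : rproj S u - rproj S v =
    (rn v)^-1 *: ((u - v) + ((rn v - rn u) / rn u) *: u).
  by apply/rowP => i; rewrite /rproj !mxE; field; rewrite !lt0r_neq0.
rewrite rnormZ gtr0_norm ?invr_gt0 // [X in _ <= X]mulrC ler_pM2l ?invr_gt0 //.
apply: le_trans (rnormD _ _) _.
rewrite rnormZ normrM normfV (gtr0_norm ru) mulfVK ?gt_eqF //.
have : `|rn v - rn u| <= rn (u - v).
  rewrite ler_norml -rnorm_distC rnorm_lerB_dist andbT lerNl opprB.
  by rewrite -rnorm_distC rnorm_lerB_dist.
lra.
Qed.

Lemma dotp_le_rnorm (v : V) (k : R) u :
  (forall w, S w -> dotp w v <= k) -> dotp u v <= k * rn u.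
Proof.
move=> Sk; rewrite {1}(rproj_scaleE u) dotpZl mulrC.
by apply: ler_wpM2r; [exact: rnorm_ge0 | exact: Sk (rproj_shape u)].
Qed.

(** * Strict convexity from uniform curvature *)

Variable rho : R.
Hypothesis rho_gt0 : 0 < rho.
Hypothesis S_curved : forall p, bdry S p ->
  exists c : V, enorm (p - c) = rho /\ S `<=` eball c rho.

Lemma supporting_ball x : x != 0 -> exists2 nu : V, sqnorm nu = rho ^+ 2 &
  forall w, S w -> 2 * dotp w nu + sqnorm (w - rproj S x) <= 2 * dotp (rproj S x) nu.
Proof.
move=> x0; have [c [pc Sc]] := S_curved (rproj_bdry x0); set p := rproj S x.
have nuE : sqnorm (p - c) = rho ^+ 2 by rewrite -pc /enorm sqr_sqrtr ?sqnorm_ge0.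
exists (p - c) => // w /Sc/(eball_sqnorm (ltW rho_gt0)).
have -> : w - c = (w - p) + (p - c) by rewrite addrA subrK.
rewrite sqnormD dotpBl nuE; lra.
Qed.

(* Bounds [dotp p (p - c)] for [p] in [S] and [c] the centre of a supporting
   ball of radius [rho] at [p]. *)
Definition curv_const := (B0 + rho ^+ 2) / 2.

Lemma curv_const_gt0 : 0 < curv_const.
Proof.
rewrite divr_gt0 // ltr_wpDl ?exprn_gt0 //.
exact: le_trans (sqnorm_ge0 0) (S_bounded shape0).
Qed.

(* Test [x - y] against the outward normal [nu] of the supporting ball at
   [rproj S x]: since that ball contains [S], [rproj S y] lags behind
   [rproj S x] in direction [nu] by [sqnorm (rproj S y - rproj S x) / 2]. *)
Lemma rnorm_sub_curved x y : x != 0 -> y != 0 ->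
  rn x - rn y + rn y * sqnorm (rproj S y - rproj S x) / (2 * curv_const)
    <= rn (x - y).
Proof.
move=> x0 y0; have [nu nuE Snu] := supporting_ball x0.
set p := rproj S x in Snu *; set k := dotp p nu in Snu.
set Q := sqnorm (rproj S y - p).
have k_gt0 : 0 < k.
  have := Snu 0 shape0; rewrite dotp0l sub0r sqnormN.
  have : 0 < sqnorm p by rewrite sqnorm_gt0 rproj_neq0.
  lra.
have k_le : k <= curv_const.
  have := dotp_le_sqnorm p nu; have := S_bounded (rproj_shape x).
  rewrite /curv_const nuE -/p -/k; lra.
have S_le w : S w -> dotp w nu <= k.
  by move=> /Snu; have := sqnorm_ge0 (w - p); lra.
have dxy := dotp_le_rnorm (x - y) S_le; rewrite dotpBl in dxy.
have dx : dotp x nu = rn x * k by rewrite {1}(rproj_scaleE x) dotpZl.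
have dy : 2 * dotp y nu <= rn y * (2 * k - Q).
  rewrite {1}(rproj_scaleE y) dotpZl mulrCA; apply: ler_wpM2l; first exact: rnorm_ge0.
  by have := Snu _ (rproj_shape y); rewrite -/Q; lra.
have W0 : 0 <= rn y * Q by rewrite mulr_ge0 ?rnorm_ge0 ?sqnorm_ge0.
apply: le_trans (_ : rn x - rn y + rn y * Q / (2 * k) <= _).
  rewrite lerD2l; apply: ler_wpM2l => //.
  by have := curv_const_gt0; rewrite lef_pV2 ?posrE; lra.
rewrite -(ler_pM2l k_gt0) mulrDr.
have -> : k * (rn y * Q / (2 * k)) = rn y * Q / 2 by field; exact: lt0r_neq0.
lra.
Qed.

Lemma rnorm_sub_angle x y : x != 0 -> y != 0 ->
  rn x - rn y + rn y * (eps * rn (rproj S y - rproj S x)) ^+ 2 / (2 * curv_const)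
    <= rn (x - y).
Proof.
move=> x0 y0; apply: le_trans (rnorm_sub_curved x0 y0).
rewrite lerD2l; apply: ler_wpM2r.
  by rewrite invr_ge0 mulr_ge0 // ltW ?curv_const_gt0.
by apply: ler_wpM2l; [exact: rnorm_ge0 | exact: sqnorm_ge_rnorm].
Qed.

(** * Distances to R_0^n and B_0^n *)

(* Rounding down the coordinates moves a point by Euclidean distance at most
   [sqrt d < d + 1]; the cube of side [eps] lies in [S]. *)
Definition lattice_radius := (d%:R + 1) / eps.

Lemma lattice_radius_gt0 : 0 < lattice_radius.
Proof. by rewrite divr_gt0 // ltr_wpDl. Qed.

Lemma lattice_round q : exists2 y, lattice y & rn (y - q) <= lattice_radius.
Proof.
exists (\row_i (Num.floor (q ord0 i))%:~R) => [i|]; first by rewrite mxE intr_int.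
apply: rnorm_le_scale; apply: scales_sqnorm; first exact: lattice_radius_gt0.
rewrite /lattice_radius mulrC divfK ?gt_eqF //.
apply: (@le_lt_trans _ _ d%:R); last by have : 0 <= d%:R :> R by []; nra.
have -> : d%:R = \sum_(i < d) (1 : R) by rewrite sumr_const card_ord.
apply: ler_sum => i _; rewrite !mxE.
have := floor_itv (q ord0 i); rewrite intrD; nra.
Qed.

Lemma rdist0l y : rdist S 0 y = rn y.
Proof. by rewrite /rdist sub0r rnormN. Qed.

Lemma rdist_set_le x (A : set V) y : A y -> rdist_set S x A <= rdist S x y.
Proof.
move=> Ay; apply: ge_inf; last by exists y.
by exists 0 => _ [w _ <-]; exact: rnorm_ge0.
Qed.

Lemma rdist_set_ge x (A : set V) (c : R) : A !=set0 ->
  (forall y, A y -> c <= rdist S x y) -> c <= rdist_set S x A.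
Proof.
move=> [y Ay] c_le; apply: lb_le_inf; first by exists (rdist S x y), y.
by move=> _ [w Aw <-]; exact: c_le.
Qed.

Lemma R0set_near (z : V) (r del bet alp : R) (n : nat) x : 0 < del ->
  n%:R / (1 + del) + 2 * lattice_radius < n%:R - n%:R `^ bet ->
  2 * lattice_radius <= n%:R `^ (alp - 1) * (n%:R / (1 + del)) ->
  n%:R < rn x -> rdist S (rproj S x) z < r ->
  exists2 y, R0set S z r del bet alp n y &
    rn (x - y) <= rn x - n%:R + n%:R `^ bet + 2 * lattice_radius.
Proof.
move=> del0 lt_bet le_alp lt_x sec_x; set D := lattice_radius in lt_bet le_alp *.
set L := n%:R - n%:R `^ bet - D.
have D0 : 0 < D := lattice_radius_gt0.
have nd0 : 0 <= n%:R / (1 + del) by apply: divr_ge0; [exact: ler0n | lra].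
have LE : L = n%:R - n%:R `^ bet - D by [].
have nb0 := powR_ge0 (n%:R : R) bet.
have L_gt : n%:R / (1 + del) < L - D by lra.
have L0 : 0 < L by lra.
have x0 : 0 < rn x by apply: le_lt_trans lt_x.
set q := (L / rn x) *: x.
have rq : rn q = L by rewrite rnormZ ger0_norm ?divr_ge0 ?ltW // divfK ?gt_eqF.
have [y ly yq] := lattice_round q; rewrite -/D in yq.
have ry_le : rn y <= L + D by have := rnormD q (y - q); rewrite addrC subrK rq; lra.
have ry_ge : L - D <= rn y.
  by have := rnorm_lerB_dist q y; rewrite rq rnorm_distC; lra.
have y0 : y != 0 by rewrite -rnorm_gt0; lra.
have q0 : q != 0 by rewrite -rnorm_gt0 rq.
have pq : rproj S q = rproj S x.
  rewrite /rproj rq /q scalerA; congr (_ *: _); field.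
  by rewrite !lt0r_neq0.
have py : rn (rproj S y - rproj S x) <= n%:R `^ (alp - 1).
  rewrite -pq; apply: le_trans (rnorm_rprojB_le y0 q0) _.
  rewrite rq ler_pdivrMr //; apply: le_trans (_ : 2 * D <= _); first lra.
  apply: le_trans le_alp _; apply: ler_wpM2l; [exact: powR_ge0 | lra].
exists y.
  split=> //; split.
    by rewrite /Dann /Dball /= rdist0l; split; [lra | apply/negP; rewrite -ltNge; lra].
  split=> //; apply: le_lt_trans (_ : _ <= rn (rproj S y - rproj S x) +
    rn (rproj S x - z)) _.
    by move: (rnormD (rproj S y - rproj S x) (rproj S x - z)); rewrite addrA subrK.
  by rewrite /rdist in sec_x; lra.
have -> : x - y = (1 - L / rn x) *: x + (q - y).
  by rewrite /q scalerBl scale1r addrA subrK.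
apply: le_trans (rnormD _ _) _; rewrite rnormZ rnorm_distC.
rewrite ger0_norm; last by rewrite subr_ge0 ler_pdivrMr // mul1r; lra.
by rewrite mulrBl mul1r divfK ?gt_eqF //; lra.
Qed.

Lemma B0set_far (z : V) (r del bet alp : R) (n : nat) x (T : R) : 0 < del ->
  x != 0 -> rdist S (rproj S x) z < r ->
  T <= rn x - n%:R / (1 + del) ->
  T <= rn x - n%:R - n%:R `^ bet +
    n%:R / (1 + del) * (eps * n%:R `^ (alp - 1)) ^+ 2 / (2 * curv_const) ->
  forall w, B0set S z r del bet alp n w -> T <= rdist S x w.
Proof.
move=> del0 x0 sec_x T_in T_ann w [[w_in | [[w_le w_gt] w_sec]] _].
  by move: w_in; rewrite /Dball /= rdist0l /rdist => w_in;
    have := rnorm_lerB_dist x w; lra.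
move: w_le w_gt; rewrite /Dball /= !rdist0l => w_le /negP; rewrite -ltNge => w_gt.
have nd0 : 0 <= n%:R / (1 + del) by apply: divr_ge0; [exact: ler0n | lra].
have w0 : w != 0 by rewrite -rnorm_gt0; lra.
have g_ge : n%:R `^ (alp - 1) <= rn (rproj S w - rproj S x).
  have : r + n%:R `^ (alp - 1) <= rdist S (rproj S w) z.
    by rewrite leNgt; apply/negP => w_in; apply: w_sec.
  have := rnormD (rproj S w - rproj S x) (rproj S x - z).
  by rewrite addrA subrK; rewrite /rdist in sec_x *; lra.
have := rnorm_sub_angle x0 w0; rewrite /rdist.
set g := rn (rproj S w - rproj S x) in g_ge *.
have eps_g : (eps * n%:R `^ (alp - 1)) ^+ 2 <= (eps * g) ^+ 2.
  have e1 : 0 <= eps * n%:R `^ (alp - 1) by rewrite mulr_ge0 ?powR_ge0 // ltW.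
  have : eps * n%:R `^ (alp - 1) <= eps * g by rewrite ler_pM2l.
  nra.
have : n%:R / (1 + del) * (eps * n%:R `^ (alp - 1)) ^+ 2 / (2 * curv_const) <=
       rn w * (eps * g) ^+ 2 / (2 * curv_const).
  apply: ler_wpM2r; first by rewrite invr_ge0 mulr_ge0 // ltW ?curv_const_gt0.
  by apply: ler_pM => //; [exact: sqr_ge0 | exact: ltW].
lra.
Qed.

Lemma rdist_R0set_lt_B0set {z : V} {r del bet alp : R} {n : nat} {x : V} :
  0 < del ->
  n%:R `^ bet + 2 * lattice_radius + 4 * (del * n%:R) `^ bet + 1
    <= n%:R - n%:R / (1 + del) ->
  2 * lattice_radius <= n%:R `^ (alp - 1) * (n%:R / (1 + del)) ->
  2 * n%:R `^ bet + 2 * lattice_radius + 4 * (del * n%:R) `^ bet + 1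
    <= n%:R / (1 + del) * (eps * n%:R `^ (alp - 1)) ^+ 2 / (2 * curv_const) ->
  R1set S z r del bet n x ->
  rdist_set S x (R0set S z r del bet alp n) + 4 * (del * n%:R) `^ bet
    < rdist_set S x (B0set S z r del bet alp n).
Proof.
move=> del0 C_in C_alp C_ann [[[_ x_out] [x0 sec_x]] _].
move: x_out; rewrite /Dball /= rdist0l => /negP; rewrite -ltNge => lt_x.
have dpos := powR_ge0 (del * n%:R) bet.
have [y R0y xy] : exists2 y, R0set S z r del bet alp n y &
    rn (x - y) <= rn x - n%:R + n%:R `^ bet + 2 * lattice_radius.
  by apply: R0set_near => //; lra.
set T := rn x - n%:R + n%:R `^ bet + 2 * lattice_radius + 4 * (del * n%:R) `^ bet + 1.
apply: (@lt_le_trans _ _ T).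
  by have := rdist_set_le x R0y; rewrite /rdist /T; lra.
apply: rdist_set_ge.
  exists 0; split; last by move=> i; rewrite mxE.
  by left; rewrite /Dball /= rdist0l rnorm0; apply: divr_ge0; [exact: ler0n | lra].
by apply: B0set_far x0 sec_x _ _ => //; rewrite /T; lra.
Qed.

End Gauge.

Lemma interior0_cube (R : realType) d (S : set 'rV[R]_d) : interior S 0 ->
  exists2 eps : R, 0 < eps &
    forall u : 'rV[R]_d, (forall i, `|u ord0 i| < eps) -> S u.
Proof.
move=> /nbhs_ballP [e /= e0 eS]; exists e => // u ue; apply: eS.
by apply: ball_row => // j; rewrite mxE sub0r normrN.
Qed.

Lemma lattice_symmetricN (R : realType) d (S : set 'rV[R]_d) :
  lattice_symmetric S -> forall u, S u -> S (- u).
Proof.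
move=> symS u /(symS 1%g (fun _ => true)); congr S; apply/rowP => i.
by rewrite !mxE perm1 expr1 mulN1r.
Qed.

Lemma eball_bounded (R : realType) d (S : set 'rV[R]_d) c (rho : R) : 0 <= rho ->
  S `<=` eball c rho -> forall w, S w -> sqnorm w <= 2 * rho ^+ 2 + 2 * sqnorm c.
Proof.
move=> rho0 Sc w /Sc/(eball_sqnorm rho0) wc.
have := dotp_le_sqnorm (w - c) c; have := sqnormD (w - c) c; rewrite subrK; lra.
Qed.

(** * Asymptotics *)

Lemma powRD_gt0 (R : realType) (x a b : R) : 0 < x -> x `^ (a + b) = x `^ a * x `^ b.
Proof. by move=> x0; rewrite powRD //; apply/implyP => _; rewrite gt_eqF. Qed.

Lemma powR_dominated (R : realType) (e g a c : R) : e < g -> 0 < c ->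
  \forall n \near \oo, a * n%:R `^ e <= c * n%:R `^ g.
Proof.
move=> eg c0; have ge0 : 0 < g - e by rewrite subr_gt0.
set M := `|a| / c + 1; set K := M `^ (g - e)^-1.
have M0 : 0 < M by have := divr_ge0 (normr_ge0 a) (ltW c0); rewrite /M; lra.
near=> n.
have n_ge : K + 1 <= n%:R by near: n; exact: nbhs_infty_ger.
have n0 : 0 < n%:R :> R by have : 0 <= K := powR_ge0 _ _; lra.
have M_le : M <= n%:R `^ (g - e).
  have -> : M = K `^ (g - e) by rewrite /K -powRrM mulVf ?gt_eqF // powRr1 // ltW.
  by apply: ge0_ler_powR; rewrite ?nnegrE ?powR_ge0 //; lra.
rewrite -[g](subrKC e) powRD_gt0 // mulrCA [X in X <= _]mulrC.
apply: ler_wpM2l; first exact: powR_ge0.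
apply: le_trans (ler_norm a) _; move: M_le; rewrite -(ler_pM2l c0).
by rewrite /M mulrDr mulr1 mulrCA divff ?gt_eqF // mulr1; lra.
Unshelve. all: by end_near.
Qed.

Lemma separation_conditions_near (R : realType) (D eps K del bet alp : R) :
  0 < D -> 0 < eps -> 0 < K -> 0 < del -> 0 <= bet < 1 -> bet < 2 * alp - 1 ->
  \forall n \near \oo, [/\
    n%:R `^ bet + 2 * D + 4 * (del * n%:R) `^ bet + 1 <= n%:R - n%:R / (1 + del),
    2 * D <= n%:R `^ (alp - 1) * (n%:R / (1 + del)) &
    2 * n%:R `^ bet + 2 * D + 4 * (del * n%:R) `^ bet + 1
      <= n%:R / (1 + del) * (eps * n%:R `^ (alp - 1)) ^+ 2 / (2 * K)].
Proof.
move=> D0 eps0 K0 del0 /andP[bet0 bet1] bet_alp.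
have del1 : 0 < 1 + del by lra.
set c := del / (1 + del) / 2; set c' := eps ^+ 2 / ((1 + del) * (2 * K)) / 2.
have c0 : 0 < c by rewrite !divr_gt0.
have c'0 : 0 < c' by rewrite !divr_gt0 ?exprn_gt0 ?mulr_gt0.
have db0 := powR_ge0 del bet.
near=> n.
have n1 : 1 <= n%:R :> R by near: n; exact: nbhs_infty_ger.
have n0 : 0 < n%:R :> R by lra.
have nb0 := powR_ge0 (n%:R : R) bet.
have h1 : (1 + 4 * del `^ bet) * n%:R `^ bet <= c * n%:R `^ 1.
  by near: n; exact: powR_dominated.
have h2 : (2 * D + 1) * n%:R `^ 0 <= c * n%:R `^ 1.
  by near: n; apply: powR_dominated.
have h3 : 2 * D * n%:R `^ 0 <= (1 + del)^-1 * n%:R `^ alp.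
  by near: n; apply: powR_dominated; rewrite ?invr_gt0 //; lra.
have h4 : (2 + 4 * del `^ bet) * n%:R `^ bet <= c' * n%:R `^ (2 * alp - 1).
  by near: n; exact: powR_dominated.
have h5 : (2 * D + 1) * n%:R `^ 0 <= c' * n%:R `^ (2 * alp - 1).
  by near: n; apply: powR_dominated; lra.
rewrite powRr0 !mulr1 in h2 h3 h5; rewrite (powRr1 (ltW n0)) in h1 h2.
have dn : (del * n%:R) `^ bet = del `^ bet * n%:R `^ bet by rewrite powRM // ltW.
rewrite dn; split.
- have -> : n%:R - n%:R / (1 + del) = 2 * c * n%:R by rewrite /c; field; lra.
  lra.
- rewrite -[X in _ * (X / _)](powRr1 (ltW n0)) mulrA -powRD_gt0 // subrK mulrC.
  lra.
- have -> : n%:R / (1 + del) * (eps * n%:R `^ (alp - 1)) ^+ 2 / (2 * K) =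
            2 * c' * n%:R `^ (2 * alp - 1).
    have -> : 2 * alp - 1 = (alp - 1) + ((alp - 1) + 1) by ring.
    rewrite !powRD_gt0 // (powRr1 (ltW n0)) /c'.
    by field; rewrite !lt0r_neq0 ?mulr_gt0.
  lra.
Unshelve. all: by end_near.
Qed.

Unset Implicit Arguments.

Theorem claim1 (R : realType) (d : nat) (S : set 'rV[R]_d) (z : 'rV[R]_d)
    (r del bet alp : R) :
  richardson_shape S -> uniformly_curved S ->
  bdry S z -> 0 < r -> 0 < del < 1 -> 2^-1 < bet < 1 -> 2^-1 < alp < 1 ->
  (bet + 1) / 2 < alp ->
  exists N : nat, forall n : nat, (N <= n)%N -> (1 <= n)%N ->
    forall x : 'rV[R]_d, R1set S z r del bet n x ->
      rdist_set S x (R0set S z r del bet alp n) + 4 * (del * n%:R) `^ bet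
        < rdist_set S x (B0set S z r del bet alp n).
Proof.
move=> [S_compact S_convex S_int S_sym] [rho rho0 S_curved] z_bdry _
  /andP[del0 _] /andP[bet0 bet1] _ bet_alp.
have [eps eps0 cube] := interior0_cube S_int.
have S_closed : closed S by apply: compact_closed => //; exact: norm_hausdorff.
have [c [_ Sc]] := S_curved z z_bdry.
have S_bounded := eball_bounded (ltW rho0) Sc.
have S_symN := lattice_symmetricN S_sym.
have bet01 : 0 <= bet < 1 by apply/andP; split; lra.
have bet_alp' : bet < 2 * alp - 1 by lra.
have [N _ HN] := separation_conditions_near (lattice_radius_gt0 d eps0) eps0
  (curv_const_gt0 eps0 cube S_bounded rho0) del0 bet01 bet_alp'.
exists N => n /HN [C_in C_alp C_ann] _ x hx.
by apply: (rdist_R0set_lt_B0set eps0 cube S_convex S_symN S_bounded S_closed rho0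
  S_curved del0 _ _ _ hx).
Qed.
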